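(* Let $R$ and $S$ be commutative rings with identity, $f:R\to S$ a ring homomorphism, and $J$ a nonzero proper ideal of $S$. Let $\mathfrak{p}$ and $\{\mathfrak{p}_\alpha\}_{\alpha\in\Lambda}$ be prime ideals of $R$, and $\mathfrak{q}$ and $\{\mathfrak{q}_\alpha\}_{\alpha\in\Lambda}$ be prime ideals of $S$ not containing $J$. Then: (1) $\bigcap_{\alpha\in\Lambda}\mathfrak{p}_\alpha\subseteq\mathfrak{p}$ if and only if $\bigcap_{\alpha\in\Lambda}\mathfrak{p}_\alpha^{\prime_f}\subseteq\mathfrak{p}^{\prime_f}$. (2) $\bigcap_{\alpha\in\Lambda}\mathfrak{p}_\alpha\supseteq\mathfrak{p}$ if and only if $\bigcap_{\alpha\in\Lambda}\mathfrak{p}_\alpha^{\prime_f}\supseteq\mathfrak{p}^{\prime_f}$. (3) $\bigcap_{\alpha\in\Lambda}\mathfrak{q}_\alpha\subseteq\mathfrak{q}$ if and only if $\bigcap_{\alpha\in\Lambda}\overline{\mathfrak{q}_\alpha}^f\subseteq\overline{\mathfrak{q}}^f$. (4) If $\bigcap_{\alpha\in\Lambda}\mathfrak{q}_\alpha\supseteq\mathfrak{q}$, then $\bigcap_{\alpha\in\Lambda}\overline{\mathfrak{q}_\alpha}^f\supseteq\overline{\mathfrak{q}}^f$. The converse holds if either $f$ is surjective or $\operatorname{Spec}(S)\setminus V(J)$ is compactly packed. (5) $\bigcap_{\alpha\in\Lambda}\overline{\mathfrak{q}_\alpha}^f\subseteq\mathfrak{p}^{\prime_f}$ if and only if $f^{-1}\big(\bigcap_{\alpha\in\Lambda}\mathfrak{q}_\alpha+J\big)\subseteq\mathfrak{p}$.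 (6) $\bigcap_{\alpha\in\Lambda}\mathfrak{p}_\alpha^{\prime_f}\not\subseteq\overline{\mathfrak{q}}^f$.
   Context: $R\bowtie^f J:=\{(r,f(r)+j)\mid r\in R,\ j\in J\}$, a subring of $R\times S$. For a prime ideal $\mathfrak{p}$ of $R$, $\mathfrak{p}^{\prime_f}:=\{(p,f(p)+j)\mid p\in\mathfrak{p},\ j\in J\}$; for a prime ideal $\mathfrak{q}$ of $S$ with $J\not\subseteq\mathfrak{q}$, $\overline{\mathfrak{q}}^f:=\{(r,f(r)+j)\mid r\in R,\ j\in J,\ f(r)+j\in\mathfrak{q}\}$; both are prime ideals of $R\bowtie^f J$. $V(J)$ is the set of prime ideals of $S$ containing $J$. A subset $X\subseteq\operatorname{Spec}(S)$ is compactly packed if whenever an ideal $I$ of $S$ is contained in the union of a family $\{\mathfrak{q}_i\}_i$ of elements of $X$, then $I\subseteq\mathfrak{q}_i$ for some $i$. *)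

From mathcomp Require Import all_boot all_order all_algebra.
Set Implicit Arguments. Unset Strict Implicit. Unset Printing Implicit Defensive.
Import GRing.Theory.
Local Open Scope ring_scope.

Definition incl {T : Type} (A B : T -> Prop) : Prop := forall x, A x -> B x.

Definition is_ideal (R : comPzRingType) (I : R -> Prop) : Prop :=
  [/\ I 0, (forall x y, I x -> I y -> I (x - y)) & (forall r x, I x -> I (r * x))].

Definition is_prime (R : comPzRingType) (I : R -> Prop) : Prop :=
  [/\ is_ideal I, ~ I 1 & (forall a b, I (a * b) -> I a \/ I b)].

(* R ⋈^f J = {(r, f r + j) | r in R, j in J}, as a incl of R × S *)
Definition amalg (R S : comPzRingType) (f : {rmorphism R -> S}) (J : S -> Prop)
  : R * S -> Prop :=
  fun x => exists r j, J j /\ x = (r, f r + j).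

(* p^{'_f} = {(p, f p + j) | p in p, j in J} *)
Definition prime_lift (R S : comPzRingType) (f : {rmorphism R -> S}) (J : S -> Prop)
  (p : R -> Prop) : R * S -> Prop :=
  fun x => exists a j, p a /\ J j /\ x = (a, f a + j).

(* \overline{q}^f = {(r, f r + j) | r in R, j in J, f r + j in q} *)
Definition prime_bar (R S : comPzRingType) (f : {rmorphism R -> S}) (J : S -> Prop)
  (q : S -> Prop) : R * S -> Prop :=
  fun x => exists r j, J j /\ q (f r + j) /\ x = (r, f r + j).

(* Intersection of a family of subsets of R ⋈^f J, taken inside R ⋈^f J
   (so the empty intersection is the whole ring R ⋈^f J). *)
Definition amalg_bigcap (R S : comPzRingType) (f : {rmorphism R -> S}) (J : S -> Prop)
  (L : Type) (P : L -> R * S -> Prop) : R * S -> Prop :=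
  fun x => amalg f J x /\ forall a, P a x.

Definition bigcap {T : Type} (L : Type) (P : L -> T -> Prop) : T -> Prop :=
  fun x => forall a, P a x.

Definition ideal_add (S : comPzRingType) (I K : S -> Prop) : S -> Prop :=
  fun x => exists a b, I a /\ K b /\ x = a + b.

Definition preim_set {A B : Type} (f : A -> B) (X : B -> Prop) : A -> Prop :=
  fun x => X (f x).

Definition compactly_packed (S : comPzRingType) (X : (S -> Prop) -> Prop) : Prop :=
  forall (I : S -> Prop) (L : Type) (qs : L -> S -> Prop),
    is_ideal I -> (forall i, X (qs i)) ->
    incl I (fun x => exists i, qs i x) -> exists i, incl I (qs i).

Definition spec_minus_V (S : comPzRingType) (J : S -> Prop) : (S -> Prop) -> Prop :=
  fun q => is_prime q /\ ~ incl J q.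

From mathcomp Require Import all_boot all_order all_algebra.
From Stdlib Require Import Classical FunctionalExtensionality PropExtensionality.
Set Implicit Arguments. Unset Strict Implicit. Unset Printing Implicit Defensive.
Import GRing.Theory.
Local Open Scope ring_scope.

(* A point (x, y) of R ⋈^f J is determined by x and its J-component y - f x:
   p^{'_f} is "x ∈ p" and \overline{q}^f is "y ∈ q", and intersections commute
   with both constructions.  Hence (1) and (2) say that p ↦ p^{'_f} is an order
   embedding, and (5) says that y ∈ q with y ≡ f x mod J forces x ∈ p, i.e.
   f^{-1}(q + J) ⊆ p.  For (3) and (4), take an ideal A and a prime Q ⊉ J:
   if s ∈ A and j ∈ J \ Q then (0, s j) lies in \overline{A}^f, so
   \overline{A}^f ⊆ \overline{Q}^f forces s j ∈ Q,
   hence s ∈ Q as Q is prime.  For (6), (0, j) with j ∈ J \ q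
   lies in every p_α^{'_f} but not in \overline{q}^f. *)

Lemma not_incl_ex (T : Type) (A B : T -> Prop) :
  ~ incl A B -> exists x, A x /\ ~ B x.
Proof.
move=> nAB; apply: NNPP => nex; apply: nAB => x Ax.
by apply: NNPP => nBx; apply: nex; exists x.
Qed.

Section Ideals.
Variable R : comPzRingType.

Lemma idealN (I : R -> Prop) x : is_ideal I -> I x -> I (- x).
Proof. by case=> I0 IB _ Ix; rewrite -sub0r; apply: IB. Qed.

Lemma bigcap_ideal (L : Type) (I : L -> R -> Prop) :
  (forall a, is_ideal (I a)) -> is_ideal (bigcap I).
Proof.
move=> hI; split=> [a | x y Ix Iy a | r x Ix a]; have [I0 IB IM] := hI a.
- exact: I0.
- exact: IB.
- exact: IM.
Qed.

Lemma prime_mulr_notin (Q : R -> Prop) s j :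
  is_prime Q -> Q (s * j) -> ~ Q j -> Q s.
Proof. by case=> _ _ Qpr /Qpr[]. Qed.

End Ideals.

Section Amalgamation.
Variables (R S : comPzRingType) (f : {rmorphism R -> S}) (J : S -> Prop).

Lemma amalgE z : amalg f J z <-> J (z.2 - f z.1).
Proof.
split=> [[r [j [Jj ->]]] | Jz] /=; first by rewrite addrAC subrr add0r.
by exists z.1, (z.2 - f z.1); rewrite subrKC -surjective_pairing.
Qed.

Lemma prime_liftE (P : R -> Prop) z :
  prime_lift f J P z <-> P z.1 /\ J (z.2 - f z.1).
Proof.
split=> [[a [j [Pa [Jj ->]]]] | [Pz Jz]] /=.
  by rewrite addrAC subrr add0r.
by exists z.1, (z.2 - f z.1); rewrite subrKC -surjective_pairing.
Qed.

Lemma prime_barE (Q : S -> Prop) z :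
  prime_bar f J Q z <-> J (z.2 - f z.1) /\ Q z.2.
Proof.
split=> [[r [j [Jj [Qrj ->]]]] | [Jz Qz]] /=.
  by rewrite addrAC subrr add0r.
by exists z.1, (z.2 - f z.1); rewrite subrKC -surjective_pairing.
Qed.

Lemma amalg_bigcap_lift (L : Type) (P : L -> R -> Prop) :
  amalg_bigcap f J (fun a => prime_lift f J (P a)) = prime_lift f J (bigcap P).
Proof.
apply: functional_extensionality => z; apply: propositional_extensionality.
split=> [[/amalgE Jz Pz] | /prime_liftE[Pz Jz]].
  by apply/prime_liftE; split=> // a; have /prime_liftE[] := Pz a.
by split=> [|a]; [apply/amalgE | apply/prime_liftE].
Qed.

Lemma amalg_bigcap_bar (L : Type) (Q : L -> S -> Prop) :
  amalg_bigcap f J (fun a => prime_bar f J (Q a)) = prime_bar f J (bigcap Q).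
Proof.
apply: functional_extensionality => z; apply: propositional_extensionality.
split=> [[/amalgE Jz Qz] | /prime_barE[Jz Qz]].
  by apply/prime_barE; split=> // a; have /prime_barE[] := Qz a.
by split=> [|a]; [apply/amalgE | apply/prime_barE].
Qed.

Lemma prime_barS (A B : S -> Prop) :
  incl A B -> incl (prime_bar f J A) (prime_bar f J B).
Proof.
by move=> AB z /prime_barE[Jz Az]; apply/prime_barE; split=> //; apply: AB.
Qed.

Lemma not_incl_lift_bar (A : R -> Prop) (Q : S -> Prop) :
  A 0 -> ~ incl J Q -> ~ incl (prime_lift f J A) (prime_bar f J Q).
Proof.
move=> A0 /not_incl_ex[j [Jj nQj]] AQ.
have /AQ /prime_barE[_ /= Qj] : prime_lift f J A (0, j).
  by apply/prime_liftE; rewrite /= rmorph0 subr0.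
exact: nQj.
Qed.

Hypothesis idealJ : is_ideal J.

Lemma incl_prime_lift (A B : R -> Prop) :
  incl A B <-> incl (prime_lift f J A) (prime_lift f J B).
Proof.
split=> [AB z /prime_liftE[Az Jz] | AB r Ar].
  by apply/prime_liftE; split=> //; apply: AB.
have /AB /prime_liftE[] // : prime_lift f J A (r, f r).
by apply/prime_liftE; rewrite /= subrr; split=> //; case: idealJ.
Qed.

Lemma incl_prime_bar (A Q : S -> Prop) :
  is_ideal A -> is_prime Q -> ~ incl J Q ->
  incl A Q <-> incl (prime_bar f J A) (prime_bar f J Q).
Proof.
move=> idealA primeQ /not_incl_ex[j [Jj nQj]].
split=> [|AQ s As]; first exact: prime_barS.
have [_ _ JM] := idealJ; have [_ _ AM] := idealA.
have /AQ /prime_barE[_ /= Qsj] : prime_bar f J A (0, s * j).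
  apply/prime_barE; rewrite /= rmorph0 subr0.
  by split; [apply: JM | rewrite mulrC; apply: AM].
exact: prime_mulr_notin Qsj nQj.
Qed.

Lemma incl_prime_bar_bigcap (L : Type) (A : S -> Prop) (Q : L -> S -> Prop) :
  is_ideal A -> (forall a, is_prime (Q a) /\ ~ incl J (Q a)) ->
  incl A (bigcap Q) <-> incl (prime_bar f J A) (prime_bar f J (bigcap Q)).
Proof.
move=> idealA primeQ; split=> [|AQ]; first exact: prime_barS.
move=> s As a; have [primeQa nJQa] := primeQ a.
apply: (incl_prime_bar idealA primeQa nJQa).2 As => z /AQ /prime_barE[Jz Qz].
by apply/prime_barE; split=> //; apply: Qz.
Qed.

Lemma incl_bar_lift (B : S -> Prop) (P : R -> Prop) :
  incl (prime_bar f J B) (prime_lift f J P) <->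
  incl (preim_set f (ideal_add B J)) P.
Proof.
split=> [BP r [b [k [Bb [Jk frE]]]] | BP z /prime_barE[Jz Bz]].
  have /BP /prime_liftE[] // : prime_bar f J B (r, b).
  apply/prime_barE; rewrite /= frE opprD addrA subrr add0r.
  by split=> //; apply: idealN.
apply/prime_liftE; split=> //; apply: BP.
exists z.2, (f z.1 - z.2); split=> //; split; last by rewrite subrKC.
by rewrite -opprB; apply: idealN.
Qed.

End Amalgamation.

Theorem lemma2p3 (R S : comPzRingType) (f : {rmorphism R -> S}) (J : S -> Prop)
  (L : Type) (p : R -> Prop) (ps : L -> R -> Prop)
  (q : S -> Prop) (qs : L -> S -> Prop) :
  is_ideal J -> (exists j, J j /\ j <> 0) -> ~ J 1 ->
  is_prime p -> (forall a, is_prime (ps a)) ->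
  is_prime q -> ~ incl J q ->
  (forall a, is_prime (qs a) /\ ~ incl J (qs a)) ->
  ( (* (1) *)
     (
      incl (bigcap ps) p <->
        incl (amalg_bigcap f J (fun a => prime_lift f J (ps a))) (prime_lift f J p)) /\
      (* (2) *) (
      incl p (bigcap ps) <->
        incl (prime_lift f J p) (amalg_bigcap f J (fun a => prime_lift f J (ps a)))) /\
      (* (3) *) (
      incl (bigcap qs) q <->
        incl (amalg_bigcap f J (fun a => prime_bar f J (qs a))) (prime_bar f J q)) /\
      (* (4) *)
      ((incl q (bigcap qs) ->
        incl (prime_bar f J q) (amalg_bigcap f J (fun a => prime_bar f J (qs a))))
      /\ ((forall s : S, exists r : R, f r = s) \/ compactly_packed (spec_minus_V J) ->
          incl (prime_bar f J q) (amalg_bigcap f J (fun a => prime_bar f J (qs a))) ->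
          incl q (bigcap qs))) /\
      (* (5) *)
      (incl (amalg_bigcap f J (fun a => prime_bar f J (qs a))) (prime_lift f J p) <->
        incl (preim_set f (ideal_add (bigcap qs) J)) p) /\
      (* (6) *)
      ~ incl (amalg_bigcap f J (fun a => prime_lift f J (ps a))) (prime_bar f J q)).
Proof.
move=> idealJ _ _ _ primeps primeq nJq primeqs.
have [idealq _ _] := primeq.
have idealps : is_ideal (bigcap ps).
  by apply: bigcap_ideal => a; case: (primeps a).
have idealqs : is_ideal (bigcap qs).
  by apply: bigcap_ideal => a; have [[]] := primeqs a.
have bar_qs := incl_prime_bar_bigcap f idealJ idealq primeqs.
rewrite amalg_bigcap_lift amalg_bigcap_bar.
split; first exact: incl_prime_lift.
split; first exact: incl_prime_lift.
split; first exact: (incl_prime_bar f idealJ idealqs primeq nJq).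
split; first by split=> [/bar_qs | _ /bar_qs].
split; first exact: incl_bar_lift.
by apply: not_incl_lift_bar nJq; case: idealps.
Qed.
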